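(* Let $(X,\tau)$ be a fuzzifying topological space such that $\tau_P(A\cap B)\ge\min(\tau_P(A),\tau_P(B))$ for all $A,B\subseteq X$. Then $$\vDash T_2^P(X,\tau)\otimes(L_PC(X,\tau))^2\to\forall x\forall U\big(U\in N^{P}_x\to\exists V(V\in N^{P}_x\wedge Cl_P(V)\subseteq U\wedge\Gamma_P(V))\big),$$ that is, for all $x\in X$ and $U\subseteq X$, $$\max\big(0,T_2^P(X,\tau)+2L_PC(X,\tau)-2\big)\le\min\Big(1,\ 1-N^P_x(U)+\sup_{V\subseteq X}\min\big(N^P_x(V),\ \inf_{y\in X\setminus U}N^P_y(X\setminus V),\ \Gamma_P(V)\big)\Big).$$
   Context: Łukasiewicz semantics: $[\varphi\otimes\psi]=\max(0,[\varphi]+[\psi]-1)$, $[\varphi\to\psi]=\min(1,1-[\varphi]+[\psi])$, $[\wedge]=\min$, $[\forall]=\inf$, $[\exists]=\sup$, $\vDash$ means value $1$; $(L_PC)^2=L_PC\otimes L_PC$; $[Cl_P(V)\subseteq U]=\inf_{y\notin U}(1-Cl_P(V)(y))$. A fuzzifying topology on $X$ is $\tau:P(X)\to[0,1]$ with $\tau(X)=1$, $\tau(A\cap B)\ge\min(\tau(A),\tau(B))$, $\tau(\bigcup A_\lambda)\ge\inf\tau(A_\lambda)$. $N_x(A)=\sup_{x\in B\subseteq A}\tau(B)$; $Cl(A)(x)=1-N_x(X\setminus A)$; for $\mu:X\to[0,1]$, $Int(\mu)(x)=\sup_{x\in B}\min(\tau(B),\inf_{y\in B}\mu(y))$. Pre-open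 degrees $\tau_P(A)=\inf_{x\in A}Int(Cl(A))(x)$; $N^P_x(A)=\sup_{x\in B\subseteq A}\tau_P(B)$; $Cl_P(A)(x)=1-N^P_x(X\setminus A)$. $T_2^P(X,\tau)=\inf_{x\ne y}\sup\{\min(N^P_x(B),N^P_y(C)):B\cap C=\emptyset\}$. For $G\subseteq X$: $(\tau_P/G)(B)=\sup\{\tau_P(V):V\cap G=B\}$; compactness degree of $G$ w.r.t. $\rho:P(G)\to[0,1]$: with $K(\Re,G)=\inf_{x\in G}\sup_{B\ni x}\Re(B)$, $[\Re\subseteq\rho]=\inf_B\min(1,1-\Re(B)+\rho(B))$, $\wp\le\Re$ pointwise, $FF(\wp)=1-\inf\{\delta\in[0,1]:\{B:\wp(B)>\delta\}\text{ finite}\}$, $\Gamma(G,\rho)=\inf_{\Re}\min\big(1,1-\max(0,K(\Re,G)+[\Re\subseteq\rho]-1)+\sup_{\wp\le\Re}\max(0,K(\wp,G)+FF(\wp)-1)\big)$; $\Gamma_P(G)=\Gamma(G,\tau_P/G)$. $L_PC(X,\tau)=\inf_{x\in X}\sup_{B\subseteq X}\max(0,N^P_x(B)+\Gamma_P(B)-1)$. *)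

From HB Require Import structures.
From mathcomp Require Import all_boot all_order all_algebra.
From mathcomp Require Import boolp classical_sets cardinality reals.
Set Implicit Arguments. Unset Strict Implicit. Unset Printing Implicit Defensive.
Import Order.TTheory GRing.Theory Num.Theory.
Local Open Scope classical_set_scope.
Local Open Scope ring_scope.

Section Fuzz.
Variable R : realType.

(* Sup / inf of a set of values in [0,1]; empty sup = 0, empty inf = 1
   (adding the neutral element does not change a nonempty sup/inf of
   [0,1]-values). *)
Definition ssup (E : set R) : R := sup (E `|` [set 0]).
Definition iinf (E : set R) : R := inf (E `|` [set 1]).

Variable X : Type.

Definition fuzzifying_topology (tau : set X -> R) : Prop :=
  (forall A, 0 <= tau A <= 1) /\
  tau setT = 1 /\
  (forall A B, tau (A `&` B) >= Num.min (tau A) (tau B)) /\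
  (forall F : set (set X), tau (\bigcup_(A in F) A) >= iinf [set tau A | A in F]).

Variable tau : set X -> R.

Definition Nbh (t : set X -> R) (x : X) (A : set X) : R :=
  ssup [set t B | B in [set B | B x /\ B `<=` A]].

Definition Cl (A : set X) (x : X) : R := 1 - Nbh tau x (~` A).

Definition Int (mu : X -> R) (x : X) : R :=
  ssup [set Num.min (tau B) (iinf [set mu y | y in B]) | B in [set B | B x]].

Definition tauP (A : set X) : R := iinf [set Int (Cl A) x | x in A].

Definition NP (x : X) (A : set X) : R := Nbh tauP x A.

Definition ClP (A : set X) (x : X) : R := 1 - NP x (~` A).

Definition T2P : R :=
  iinf [set ssup [set Num.min (NP xy.1 BC.1) (NP xy.2 BC.2)
                 | BC in [set BC : set X * set X | BC.1 `&` BC.2 = set0]]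
       | xy in [set xy : X * X | xy.1 <> xy.2]].

(* Fuzzy families on P(G) are represented as functions set X -> R that
   vanish outside the subsets of G. *)
Definition fam_on (G : set X) (Re : set X -> R) : Prop :=
  (forall B, 0 <= Re B <= 1) /\ (forall B, ~ (B `<=` G) -> Re B = 0).

Definition tauP_rel (G : set X) (B : set X) : R :=
  ssup [set tauP V | V in [set V | V `&` G = B]].

Definition Kdeg (Re : set X -> R) (G : set X) : R :=
  iinf [set ssup [set Re B | B in [set B | B x]] | x in G].

Definition incl_deg (Re rho : set X -> R) : R :=
  iinf [set Num.min 1 (1 - Re B + rho B) | B in [set B | True]].

Definition FF (wp : set X -> R) : R :=
  1 - iinf [set d | 0 <= d <= 1 /\ finite_set [set B | wp B > d]].

Definition Gamma (G : set X) (rho : set X -> R) : R :=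
  iinf [set Num.min 1 (1 - Num.max 0 (Kdeg Re G + incl_deg Re rho - 1)
          + ssup [set Num.max 0 (Kdeg wp G + FF wp - 1)
                 | wp in [set wp | fam_on G wp /\ forall B, wp B <= Re B]])
       | Re in [set Re | fam_on G Re]].

Definition GammaP (G : set X) : R := Gamma G (tauP_rel G).

Definition LPC : R :=
  iinf [set ssup [set Num.max 0 (NP x B + GammaP B - 1) | B in [set B | True]]
       | x in [set x | True]].

End Fuzz.

(* Local compactness at x yields a set K with large pre-neighbourhood degree at
   x and large compactness degree, and N^P_x(U) yields a pre-open W inside
   U and K around x.  Pre-Hausdorffness separates x from every other point k of
   K by disjoint pre-open sets B_k and C_k; compactness of K extracts finitely
   many of them, and as τ_P is stable under finite unions (always) and finite
   intersections (by hypothesis), O = W ∩ ⋂ B_k is a pre-open neighbourhood of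
   x disjoint from the pre-open set P = ⋃ C_k, with K ⊆ W ∪ P.
   Then V = K \ P works: it contains O; a point y outside U lies in P if it is
   in K, and otherwise is separated from K by the same argument; and V is
   compact as a pre-closed part of K, Γ_P(K \ P) ≥ Γ_P(K) ⊗ τ_P(P).
   The degrees are combined in Lukasiewicz arithmetic. *)

From HB Require Import structures.
From mathcomp Require Import all_boot all_order all_algebra.
From mathcomp Require Import boolp classical_sets cardinality reals.
From mathcomp Require Import lra.
Set Implicit Arguments. Unset Strict Implicit. Unset Printing Implicit Defensive.
Import Order.TTheory GRing.Theory Num.Theory.
Local Open Scope classical_set_scope.
Local Open Scope ring_scope.

Section SupInf.
Variable R : realType.
Implicit Types (E : set R) (b c e : R).

Lemma ssup_ge0 E : 0 <= ssup E.
Proof.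
rewrite /ssup; have [h|h] := pselect (has_ubound (E `|` [set 0])).
  by apply: ub_le_sup => //; right.
by rewrite sup_out // => -[].
Qed.

Lemma le_ssup E b e : (forall y, E y -> y <= b) -> E e -> e <= ssup E.
Proof.
move=> Eb Ee; apply: ub_le_sup; last by left.
by exists (Num.max b 0) => y [/Eb|->]; rewrite le_max ?lexx ?orbT // => ->.
Qed.

Lemma ssup_le E b : 0 <= b -> (forall y, E y -> y <= b) -> ssup E <= b.
Proof. by move=> b0 Eb; apply: ge_sup; [exists 0; right|move=> y [/Eb|->]]. Qed.

Lemma ssup_gt E c : 0 <= c -> c < ssup E -> exists2 e, E e & c < e.
Proof.
move=> c0 /sup_gt => /(_ (ex_intro _ 0 (or_intror erefl))) [y [Ey|->] cy].
  by exists y.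
by move: cy; rewrite ltNge c0.
Qed.

Lemma iinf_le1 E : iinf E <= 1.
Proof.
rewrite /iinf; have [h|h] := pselect (has_lbound (E `|` [set 1])).
  by apply: ge_inf => //; right.
by rewrite inf_out // => -[].
Qed.

Lemma iinf_le E b e : (forall y, E y -> b <= y) -> E e -> iinf E <= e.
Proof.
move=> Eb Ee; apply: ge_inf; last by left.
by exists (Num.min b 1) => y [/Eb|->]; rewrite ge_min ?lexx ?orbT // => ->.
Qed.

Lemma le_iinf E b : b <= 1 -> (forall y, E y -> b <= y) -> b <= iinf E.
Proof. by move=> b1 Eb; apply: lb_le_inf; [exists 1; right|move=> y [/Eb|->]]. Qed.

Lemma iinf_lt E c : c <= 1 -> iinf E < c -> exists2 e, E e & e < c.
Proof.
move=> c1 /inf_lt => /(_ (ex_intro _ 1 (or_intror erefl))) [y [Ey|->] cy].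
  by exists y.
by move: cy; rewrite ltNge c1.
Qed.

Lemma le_ssup_img (T : Type) (f : T -> R) (A : set T) b a :
  (forall i, f i <= b) -> A a -> f a <= ssup [set f i | i in A].
Proof. by move=> fb Aa; apply: le_ssup (ex_intro2 _ _ a Aa erefl) => _ [i _ <-]. Qed.

Lemma iinf_img_le (T : Type) (f : T -> R) (A : set T) b a :
  (forall i, b <= f i) -> A a -> iinf [set f i | i in A] <= f a.
Proof. by move=> fb Aa; apply: iinf_le (ex_intro2 _ _ a Aa erefl) => _ [i _ <-]. Qed.

End SupInf.

Section Neighbourhoods.
Variables (R : realType) (X : Type) (t : set X -> R).
Hypothesis t01 : forall A, 0 <= t A <= 1.

Lemma Nbh_ge0 x A : 0 <= Nbh t x A.
Proof. exact: ssup_ge0. Qed.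

Lemma Nbh_le1 x A : Nbh t x A <= 1.
Proof. by apply: ssup_le ler01 _ => _ [B _ <-]; case/andP: (t01 B). Qed.

Lemma le_Nbh x A B : B x -> B `<=` A -> t B <= Nbh t x A.
Proof.
by move=> Bx BA; apply: (le_ssup_img (b := 1)) => [C|]; [case/andP: (t01 C)|].
Qed.

Lemma Nbh_gt x A c : 0 <= c -> c < Nbh t x A -> exists B, [/\ B x, B `<=` A & c < t B].
Proof. by move=> c0 /(ssup_gt c0) [_ [B [Bx BA] <-] cB]; exists B. Qed.

Lemma Nbh_sub x A A' : A `<=` A' -> Nbh t x A <= Nbh t x A'.
Proof.
move=> AA'; apply: ssup_le (Nbh_ge0 _ _) _ => _ [B [Bx BA] <-].
exact: le_Nbh (subset_trans BA AA').
Qed.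

End Neighbourhoods.

Section PreOpen.
Variables (R : realType) (X : Type) (tau : set X -> R).
Hypothesis tau01 : forall A, 0 <= tau A <= 1.

Lemma Cl_ge0 A x : 0 <= Cl tau A x.
Proof. by rewrite /Cl subr_ge0 Nbh_le1. Qed.

Lemma Cl_sub A A' x : A `<=` A' -> Cl tau A x <= Cl tau A' x.
Proof. by move=> AA'; rewrite /Cl lerD2l lerN2; apply: Nbh_sub => //; exact: subsetC. Qed.

Lemma Int_le (mu mu' : X -> R) x : (forall y, 0 <= mu y) ->
  (forall y, mu y <= mu' y) -> Int tau mu x <= Int tau mu' x.
Proof.
move=> mu0 le_mu; apply: ssup_le (ssup_ge0 _) _ => _ [B Bx <-].
have le_inf : iinf [set mu y | y in B] <= iinf [set mu' y | y in B].
  apply: le_iinf (iinf_le1 _) _ => _ [y By <-].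
  exact: le_trans (iinf_img_le mu0 By) (le_mu y).
apply: le_trans (le_min2 (lexx _) le_inf) _.
apply: (le_ssup_img (b := 1)) Bx => C.
by rewrite ge_min; case/andP: (tau01 C) => _ ->.
Qed.

Lemma tauP_ge0 A : 0 <= tauP tau A.
Proof. by apply: le_iinf ler01 _ => _ [x _ <-]; exact: ssup_ge0. Qed.

Lemma tauP_le1 A : tauP tau A <= 1.
Proof. exact: iinf_le1. Qed.

Lemma tauP_le_Int A z : A z -> tauP tau A <= Int tau (Cl tau A) z.
Proof. by move=> Az; apply: iinf_img_le Az => y; exact: ssup_ge0. Qed.

Lemma tauP_set0 : tauP tau set0 = 1.
Proof. by apply/eqP; rewrite eq_le iinf_le1; apply: le_iinf => // _ [x []]. Qed.

Lemma tauP_setT : tau setT = 1 -> tauP tau setT = 1.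
Proof.
move=> tauT; apply/eqP; rewrite eq_le iinf_le1; apply: le_iinf => // _ [x _ <-].
have ClT y : Cl tau setT y = 1.
  rewrite /Cl setCT; suff -> : Nbh tau y set0 = 0 by rewrite subr0.
  apply/eqP; rewrite eq_le Nbh_ge0 andbT.
  by apply: ssup_le => // e [B [By B0] _]; case: (B0 _ By).
apply: le_trans (_ : Num.min (tau setT) (iinf [set Cl tau setT y | y in setT]) <= _).
  by rewrite tauT le_min lexx; apply: le_iinf => // _ [y _ <-]; rewrite ClT.
rewrite /Int; apply: (le_ssup_img (b := 1) (a := setT)) => // C.
by rewrite ge_min; case/andP: (tau01 C) => _ ->.
Qed.

Lemma tauP_setU A B : Num.min (tauP tau A) (tauP tau B) <= tauP tau (A `|` B).
Proof.
apply: le_iinf; first by rewrite ge_min; apply/orP; left; exact: tauP_le1.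
move=> _ [z ABz <-]; rewrite ge_min; case: ABz => [Az|Bz]; apply/orP; [left|right].
- apply: le_trans (tauP_le_Int Az) (Int_le _ (Cl_ge0 A) _) => y.
  exact/Cl_sub/subsetUl.
- apply: le_trans (tauP_le_Int Bz) (Int_le _ (Cl_ge0 B) _) => y.
  exact/Cl_sub/subsetUr.
Qed.

Lemma NP_ge0 x A : 0 <= NP tau x A.
Proof. exact: Nbh_ge0. Qed.

Lemma NP_le1 x A : NP tau x A <= 1.
Proof. by apply: Nbh_le1 => B; rewrite tauP_ge0 tauP_le1. Qed.

Lemma le_NP x A B : B x -> B `<=` A -> tauP tau B <= NP tau x A.
Proof. by apply: le_Nbh => C; rewrite tauP_ge0 tauP_le1. Qed.

Lemma NP_gt x A c : 0 <= c -> c < NP tau x A ->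
  exists B, [/\ B x, B `<=` A & c < tauP tau B].
Proof. exact: Nbh_gt. Qed.

Lemma T2P_separate p q c : p <> q -> 0 <= c -> c < T2P tau ->
  exists B C, [/\ B p, C q, B `&` C = set0, c < tauP tau B & c < tauP tau C].
Proof.
move=> pq c0 cT.
have := lt_le_trans cT (iinf_img_le (b := 0) (a := (p, q)) (fun _ => ssup_ge0 _) pq).
case/(ssup_gt c0) => _ [[B C] /= BC <-]; rewrite lt_min => /andP[/NP_gt hB /NP_gt hC].
have [B' [B'p B'B cB']] := hB c0; have [C' [C'q C'C cC']] := hC c0.
exists B', C'; split => //; apply/seteqP; split => [z [/B'B zB /C'C zC]|//].
by rewrite -BC.
Qed.

Lemma LPC_gt x c : 0 <= c -> c < LPC tau ->
  exists K, c < NP tau x K + GammaP tau K - 1.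
Proof.
move=> c0 cL; have := lt_le_trans cL (iinf_img_le (fun _ => ssup_ge0 _) (I : [set x | True] x)).
case/(ssup_gt c0) => _ [K _ <-]; rewrite lt_max => /orP[|]; last by exists K.
by rewrite ltNge c0.
Qed.

End PreOpen.

Lemma seq_set_cons (I : Type) (a : I) (s : seq I) :
  [set i | List.In i (a :: s)] = a |` [set i | List.In i s].
Proof. by apply/seteqP; split => i [<-|si]; by [left|right]. Qed.

Section FiniteFamilies.
Variables (R : realType) (X : Type) (tau : set X -> R).
Hypothesis tau01 : forall A, 0 <= tau A <= 1.

Lemma le_tauP_bigcup_seq (I : Type) (s : seq I) (F : I -> set X) c :
  c <= 1 -> (forall i, c <= tauP tau (F i)) ->
  c <= tauP tau (\bigcup_(i in [set i | List.In i s]) F i).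
Proof.
move=> c1 cF; elim: s => [|a s IH].
  by rewrite (_ : [set i | List.In i [::]] = set0) // bigcup_set0 tauP_set0.
rewrite seq_set_cons bigcup_setU1; apply: le_trans (tauP_setU tau01 _ _).
by rewrite le_min; apply/andP; split; [exact: cF|exact: IH].
Qed.

Hypothesis tauT : tau setT = 1.
Hypothesis tauP_setI : forall A B, Num.min (tauP tau A) (tauP tau B) <= tauP tau (A `&` B).

Lemma le_tauP_setI c A B : c <= tauP tau A -> c <= tauP tau B -> c <= tauP tau (A `&` B).
Proof.
move=> cA cB; apply: le_trans (tauP_setI A B).
by rewrite le_min; apply/andP; split; [exact: cA|exact: cB].
Qed.

Lemma le_tauP_bigcap_seq (I : Type) (s : seq I) (F : I -> set X) c :
  c <= 1 -> (forall i, c <= tauP tau (F i)) ->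
  c <= tauP tau (\bigcap_(i in [set i | List.In i s]) F i).
Proof.
move=> c1 cF; elim: s => [|a s IH].
  by rewrite (_ : [set i | List.In i [::]] = set0) // bigcap_set0 tauP_setT.
by rewrite seq_set_cons bigcap_setU1; apply: le_tauP_setI; [exact: cF|exact: IH].
Qed.

End FiniteFamilies.

Section Compactness.
Variables (R : realType) (X : Type).
Implicit Types (G : set X) (Re rho wp : set X -> R).

Definition fin_subcover_deg G Re : R :=
  ssup [set Num.max 0 (Kdeg wp G + FF wp - 1)
       | wp in [set wp | fam_on G wp /\ forall B, wp B <= Re B]].

Lemma Kdeg_le1 Re G : Kdeg Re G <= 1.
Proof. exact: iinf_le1. Qed.

Lemma FF_le1 wp : FF wp <= 1.
Proof.
by rewrite /FF lerBlDr lerDl; apply: le_iinf ler01 _ => d [/andP[]].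
Qed.

Lemma Gamma_le G rho Re : fam_on G Re ->
  Gamma G rho <= 1 - Num.max 0 (Kdeg Re G + incl_deg Re rho - 1) + fin_subcover_deg G Re.
Proof.
move=> fRe; apply: le_trans (iinf_img_le (b := 0) _ fRe) _ => [Re'|]; last first.
  by rewrite ge_min; apply/orP; right.
rewrite le_min ler01 /=; set s := ssup _; have : 0 <= s := ssup_ge0 _.
have : Num.max 0 (Kdeg Re' G + incl_deg Re' rho - 1) <= 1.
  by rewrite ge_max ler01 /=; have := Kdeg_le1 Re' G; have : incl_deg Re' rho <= 1 := iinf_le1 _; lra.
lra.
Qed.

Lemma le_Gamma G rho c : c <= 1 ->
  (forall Re, fam_on G Re ->
     c <= 1 - Num.max 0 (Kdeg Re G + incl_deg Re rho - 1) + fin_subcover_deg G Re) ->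
  c <= Gamma G rho.
Proof. by move=> c1 cRe; apply: (le_iinf c1) => _ [Re fRe <-]; rewrite le_min c1 cRe. Qed.

Lemma fin_subcover_deg_gt0 G Re : 0 < fin_subcover_deg G Re ->
  exists wp, [/\ fam_on G wp, forall B, wp B <= Re B & 1 < Kdeg wp G + FF wp].
Proof.
case/(ssup_gt (lexx 0)) => _ [wp [fwp wpRe] <-]; rewrite lt_max ltxx /= subr_gt0.
by exists wp.
Qed.

Lemma FF_finite_cover G wp : 1 < Kdeg wp G + FF wp ->
  exists d, [/\ 0 <= d, finite_set [set B | d < wp B] &
                forall k, G k -> exists2 B, d < wp B & B k].
Proof.
rewrite /FF; set m := iinf _ => KFF; have : m < Kdeg wp G by lra.
case/(iinf_lt (Kdeg_le1 _ _)) => d [/andP[d0 _] fin] dK; exists d; split => // k Gk.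
have := lt_le_trans dK (iinf_img_le (fun _ => ssup_ge0 _) Gk).
by case/(ssup_gt d0) => _ [B Bk <-]; exists B.
Qed.

End Compactness.

Lemma finite_set_seq_witness (T : eqType) (I : Type) (F : set T) (P : I -> T -> Prop) :
  finite_set F -> (forall D, F D -> exists i, P i D) ->
  exists s : seq I, forall D, F D -> exists2 i, List.In i s & P i D.
Proof.
case/finite_seqP => s0 ->; elim: s0 => [|D s0 IH] FP; first by exists [::].
have [i PiD] := FP D (mem_head _ _).
have [s hs] : exists s : seq I, forall D', D' \in s0 -> exists2 i, List.In i s & P i D'.
  by apply: IH => D' D's0; apply: FP; rewrite /= inE D's0 orbT.
exists (i :: s) => D'; rewrite /= inE => /orP[/eqP ->|/hs [j js PjD']].
  by exists i; [left|].
by exists j; [right|].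
Qed.

Section FiniteSubcover.
Variables (R : realType) (X : Type) (tau : set X -> R).

Lemma le_tauP_rel G V : tauP tau V <= tauP_rel tau G (V `&` G).
Proof. by apply: le_ssup_img (erefl : V `&` G = V `&` G) => W; exact: tauP_le1. Qed.

Lemma GammaP_finite_subcover (I : Type) (f : I -> set X) (K : set X) c :
  0 <= c <= 1 -> 1 < GammaP tau K + c -> (forall i, c <= tauP tau (f i)) ->
  (forall k, K k -> exists i, f i k) ->
  exists s : seq I, forall k, K k -> exists2 i, List.In i s & f i k.
Proof.
move=> /andP[c0 c1] GKc cf Kf.
pose trace D := exists i, D = f i `&` K.
pose Re D := if `[< trace D >] then c else 0.
have fRe : fam_on K Re.
  split=> [D|D DK]; first by rewrite /Re; case: asboolP; rewrite ?c0 ?c1 ?lexx ?ler01.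
  rewrite /Re; case: asboolP => // -[i DfK]; exfalso; apply: DK; rewrite DfK.
  exact: subIsetr.
have incl1 : 1 <= incl_deg Re (tauP_rel tau K).
  apply: (le_iinf (lexx 1)) => _ [D _ <-]; rewrite le_min lexx /= /Re.
  have rel0 : 0 <= tauP_rel tau K D := ssup_ge0 _.
  case: asboolP => [[i ->]|_]; last by lra.
  have := le_tauP_rel K (f i); have := cf i; lra.
have cK : c <= Kdeg Re K.
  apply: (le_iinf c1) => _ [k Kk <-]; have [i fik] := Kf k Kk.
  have Re_fi : Re (f i `&` K) = c by rewrite /Re asboolT //; exists i.
  rewrite -[X in X <= _]Re_fi; apply: (le_ssup_img (b := 1)) => //.
  by move=> D; case: fRe => /(_ D) /andP[].
have [wp [_ wpRe cover]] : exists wp,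
    [/\ fam_on K wp, forall B, wp B <= Re B & 1 < Kdeg wp K + FF wp].
  apply: fin_subcover_deg_gt0; have := Gamma_le (tauP_rel tau K) fRe.
  rewrite -/(GammaP tau K); set m := Num.max 0 _.
  have : Kdeg Re K + incl_deg Re (tauP_rel tau K) - 1 <= m by rewrite le_max lexx orbT.
  lra.
have [d [d0 fin dcover]] := FF_finite_cover cover.
have traces D : d < wp D -> exists i, D = f i `&` K.
  by move: (wpRe D); rewrite /Re; case: asboolP => // _; lra.
have [s hs] := finite_set_seq_witness fin traces.
exists s => k Kk; have [D dD Dk] := dcover k Kk; have [i si DfK] := hs D dD.
by exists i => //; move: Dk; rewrite DfK => -[].
Qed.

End FiniteSubcover.

Lemma tauP_rel_approx (R : realType) (X : Type) (tau : set X -> R) (G B : set X) e :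
  0 < e -> B `<=` G ->
  exists2 W, W `&` G = B & tauP_rel tau G B - e < tauP tau W.
Proof.
move=> e0 BG; have [neg|pos] := ltP (tauP_rel tau G B - e) 0.
  by exists B; [exact: setIidl|exact: lt_le_trans neg (tauP_ge0 tau B)].
have : tauP_rel tau G B - e < tauP_rel tau G B by lra.
by case/(ssup_gt pos) => _ [W WB <-]; exists W.
Qed.

Section ClosedSubset.
Variables (R : realType) (X : Type) (tau : set X -> R).
Variables (K P : set X) (e : R).
Let V := K `&` ~` P.
Variable Wf : set X -> set X.
Hypothesis Wf_trace : forall B, B `<=` V -> Wf B `&` V = B.
Hypothesis Wf_approx : forall B, B `<=` V -> tauP_rel tau V B - e < tauP tau (Wf B).
Variable Re : set X -> R.
Hypothesis fRe : fam_on V Re.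

Let Re_ge0 B : 0 <= Re B. Proof. by case: fRe => /(_ B) /andP[]. Qed.
Let Re_le1 B : Re B <= 1. Proof. by case: fRe => /(_ B) /andP[]. Qed.

Lemma Wf_traceK B : B `<=` V -> (Wf B `&` K) `&` V = B.
Proof. by move=> BV; rewrite -setIA (setIidr (@subIsetl _ K (~` P))) Wf_trace. Qed.

(* A member [B] of [Re] is lifted to [Wf B `&` K], the trace on [K] of a nearly
   optimal pre-open extension of [B]; [K `&` P] is added with degree [tauP P] to
   cover the points of [K] outside [V]. *)
Definition extend_fam (D : set X) : R :=
  Num.max (if `[< Wf (D `&` V) `&` K = D >] then Re (D `&` V) else 0)
          (if `[< D = K `&` P >] then tauP tau P else 0).

Lemma le_extend_fam B : B `<=` V -> Re B <= extend_fam (Wf B `&` K).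
Proof.
move=> BV; rewrite /extend_fam Wf_traceK // asboolT //.
by rewrite le_max lexx.
Qed.

Lemma extend_fam_on : fam_on K extend_fam.
Proof.
split=> [D|D DK].
  have p01 := tauP_le1 tau P; have p0 := tauP_ge0 tau P.
  rewrite le_max ge_max; do 2 case: asboolP => _; by rewrite ?lexx ?Re_ge0 ?Re_le1 ?ler01.
rewrite /extend_fam; case: asboolP => [DWf|_]; first by exfalso; apply: DK; rewrite -DWf; exact: subIsetr.
case: asboolP => [DKP|_]; first by exfalso; apply: DK; rewrite DKP; exact: subIsetl.
by rewrite maxxx.
Qed.

Lemma incl_deg_extend_fam : 0 < e ->
  incl_deg Re (tauP_rel tau V) - e <= incl_deg extend_fam (tauP_rel tau K).
Proof.
move=> e0; set iR := incl_deg _ _; have iR1 : iR <= 1 := iinf_le1 _.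
apply: le_iinf; first by lra.
move=> _ [D _ <-]; have relK0 : 0 <= tauP_rel tau K D := ssup_ge0 _.
suff : extend_fam D <= 1 - iR + e + tauP_rel tau K D.
  by move=> h; rewrite le_min; apply/andP; split; lra.
rewrite /extend_fam ge_max; apply/andP; split; case: asboolP => [DWf|_]; try lra.
- have BV : D `&` V `<=` V by exact: subIsetr.
  have bound C : 0 <= Num.min 1 (1 - Re C + tauP_rel tau V C).
    rewrite le_min ler01 /=; have := Re_le1 C.
    by have : 0 <= tauP_rel tau V C := ssup_ge0 _; lra.
  have := iinf_img_le (a := D `&` V) (A := [set B | True]) bound I.
  rewrite le_min => /andP[_ iRB].
  by have := Wf_approx BV; have := le_tauP_rel tau K (Wf (D `&` V)); rewrite DWf; lra.
- by have := le_tauP_rel tau K P; rewrite (setIC P K) -DWf; lra.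
Qed.

Lemma Kdeg_extend_fam : Num.min (Kdeg Re V) (tauP tau P) <= Kdeg extend_fam K.
Proof.
apply: le_iinf; first by rewrite ge_min Kdeg_le1.
have ext_le1 D : extend_fam D <= 1 by case: extend_fam_on => /(_ D) /andP[].
move=> _ [k Kk <-]; rewrite ge_min; apply/orP; have [Pk|nPk] := pselect (P k).
  right; have : tauP tau P <= extend_fam (K `&` P).
    by rewrite /extend_fam (asboolT (erefl (K `&` P))) le_max lexx orbT.
  by move/le_trans; apply; exact: le_ssup_img ext_le1 (conj Kk Pk).
left; apply: le_trans (iinf_img_le (fun _ => ssup_ge0 _) (conj Kk nPk : V k)) _.
apply: ssup_le (ssup_ge0 _) _ => _ [B Bk <-].
have [BV|nBV] := pselect (B `<=` V); last by rewrite (fRe.2 B nBV); exact: ssup_ge0.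
apply: le_trans (le_extend_fam BV) (le_ssup_img ext_le1 _).
have [Wfk _] : (Wf B `&` V) k by rewrite Wf_trace.
exact: conj Wfk Kk.
Qed.

(* Subfamilies of [extend_fam] are pulled back to subfamilies of [Re] along
   [B |-> Wf B `&` K]. *)
Definition restrict_fam (wp : set X -> R) (B : set X) : R :=
  if `[< B `<=` V >] then Num.min (Re B) (wp (Wf B `&` K)) else 0.

Lemma restrict_fam_le wp B : restrict_fam wp B <= Re B.
Proof. by rewrite /restrict_fam; case: asboolP => _; rewrite ?ge_min ?lexx ?Re_ge0. Qed.

Lemma restrict_fam_on wp : fam_on K wp -> fam_on V (restrict_fam wp).
Proof.
move=> [wp01 _]; split=> [B|B nBV]; last by rewrite /restrict_fam asboolF.
rewrite (le_trans _ (Re_le1 B)) ?restrict_fam_le // andbT /restrict_fam.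
by case: asboolP => _; rewrite ?lexx // le_min Re_ge0; case/andP: (wp01 (Wf B `&` K)).
Qed.

Lemma Kdeg_restrict_fam wp : (forall D, wp D <= extend_fam D) ->
  Kdeg wp K <= Kdeg (restrict_fam wp) V.
Proof.
move=> wp_le; apply: (le_iinf (Kdeg_le1 _ _)) => _ [v [Kv nPv] <-].
apply: le_trans (iinf_img_le (fun _ => ssup_ge0 _) Kv) _.
apply: ssup_le (ssup_ge0 _) _ => _ [D Dv <-]; move: (wp_le D); rewrite /extend_fam.
case: (asboolP (D = K `&` P)) => [DKP|_]; first by move: Dv; rewrite DKP => -[].
case: asboolP => [DWf|_]; last by rewrite maxxx => /le_trans; apply; exact: ssup_ge0.
rewrite (max_l (Re_ge0 _)) => wpD.
have : wp D <= restrict_fam wp (D `&` V).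
  by rewrite /restrict_fam asboolT ?DWf ?le_min ?wpD ?lexx //; exact: subIsetr.
move/le_trans; apply; apply: le_ssup_img; last by split.
by move=> B; exact: le_trans (restrict_fam_le wp B) (Re_le1 B).
Qed.

Lemma FF_restrict_fam wp : FF wp <= FF (restrict_fam wp).
Proof.
rewrite /FF lerD2l lerN2; apply: (le_iinf (iinf_le1 _)) => d [/andP[d0 d1] fin].
apply: (iinf_le (b := 0)) => [y [/andP[]]//|]; split; first by rewrite d0.
apply: sub_finite_set (finite_image (fun D => D `&` V) fin) => B /=.
rewrite /restrict_fam; case: asboolP => [BV|_]; last by lra.
by rewrite lt_min => /andP[_ dwp]; exists (Wf B `&` K) => //; exact: Wf_traceK.
Qed.

Lemma fin_subcover_deg_extend_fam : fin_subcover_deg K extend_fam <= fin_subcover_deg V Re.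
Proof.
apply: ssup_le (ssup_ge0 _) _ => _ [wp [fwp wp_le] <-].
apply: le_trans (_ : Num.max 0 (Kdeg (restrict_fam wp) V + FF (restrict_fam wp) - 1) <= _).
  apply: le_max2 (lexx 0) _.
  by have := Kdeg_restrict_fam wp_le; have := FF_restrict_fam wp; lra.
apply: (le_ssup_img (b := 1) (a := restrict_fam wp)); last first.
  by split; [exact: restrict_fam_on|exact: restrict_fam_le].
by move=> w; rewrite ge_max ler01 /=; have := Kdeg_le1 w V; have := FF_le1 w; lra.
Qed.

End ClosedSubset.

Lemma GammaP_closed_subset (R : realType) (X : Type) (tau : set X -> R) (K P : set X) :
  GammaP tau K + tauP tau P - 1 <= GammaP tau (K `&` ~` P).
Proof.
apply/ler_addgt0Pr => e e0; set V := K `&` ~` P.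
have g1 : GammaP tau K <= 1 := iinf_le1 _; have p1 := tauP_le1 tau P.
suff : GammaP tau K + tauP tau P - 1 - e <= GammaP tau V by lra.
have /choice [Wf hWf] : forall B, exists W, B `<=` V ->
    W `&` V = B /\ tauP_rel tau V B - e < tauP tau W.
  move=> B; have [BV|nBV] := pselect (B `<=` V); last by exists setT => /nBV.
  by have [W WB hW] := tauP_rel_approx tau e0 BV; exists W.
have Wf_trace B (BV : B `<=` V) := (hWf B BV).1.
have Wf_approx B (BV : B `<=` V) := (hWf B BV).2.
apply: le_Gamma => [|Re fRe]; first by lra.
have := Gamma_le (tauP_rel tau K) (extend_fam_on tau Wf fRe); rewrite -/(GammaP tau K).
have := incl_deg_extend_fam Wf_approx fRe e0.
have := Kdeg_extend_fam tau Wf_trace fRe.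
have := fin_subcover_deg_extend_fam tau Wf_trace fRe.
set kR := Kdeg Re V; set iR := incl_deg Re _; set sV := fin_subcover_deg V Re.
set kR' := Kdeg _ K; set iR' := incl_deg _ (tauP_rel tau K); set sK := fin_subcover_deg K _.
move=> sKV kRK iRK gK.
have kR1 : kR <= 1 := Kdeg_le1 Re V; have iR1 : iR <= 1 := iinf_le1 _.
have sV0 : 0 <= sV := ssup_ge0 _.
have mn : kR + tauP tau P - 1 <= Num.min kR (tauP tau P).
  by rewrite le_min; apply/andP; split; lra.
have m' : kR' + iR' - 1 <= Num.max 0 (kR' + iR' - 1) by rewrite le_max lexx orbT.
suff : Num.max 0 (kR + iR - 1) <= 2 - GammaP tau K - tauP tau P + e + sV by lra.
by rewrite ge_max; apply/andP; split; lra.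
Qed.

Section Regularity.
Variables (R : realType) (X : Type) (tau : set X -> R).
Hypothesis tau01 : forall A, 0 <= tau A <= 1.
Hypothesis tauT : tau setT = 1.
Hypothesis tauP_setI : forall A B, Num.min (tauP tau A) (tauP tau B) <= tauP tau (A `&` B).

Lemma separate_point_compact (y : X) (K W : set X) c :
  0 <= c -> c < T2P tau -> 1 < GammaP tau K + c -> c <= tauP tau W -> (K y -> W y) ->
  exists O P, [/\ O y, O `&` P = set0, K `<=` W `|` P, c <= tauP tau O & c <= tauP tau P].
Proof.
move=> c0 cT GKc cW KW; have c1 : c <= 1 := ltW (lt_le_trans cT (iinf_le1 _)).
have /choice [BC hBC] : forall k, exists BC : set X * set X, [/\ BC.1 y,
    BC.1 `&` BC.2 = set0, c <= tauP tau BC.1, c <= tauP tau BC.2 & k <> y -> BC.2 k].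
  move=> k; have [->|ky] := pselect (k = y).
    exists (setT, set0); split => /=; [by []|exact: setI0| | |by []].
      by rewrite (tauP_setT tau01 tauT); exact: c1.
    by rewrite tauP_set0; exact: c1.
  have [B [C [By Ck BC0 cB cC]]] := T2P_separate (nesym ky) c0 cT.
  by exists (B, C); split => /=; [exact: By|exact: BC0|exact: ltW|exact: ltW|].
have cf k : c <= tauP tau (W `|` (BC k).2).
  case: (hBC k) => _ _ _ cC _; apply: le_trans (tauP_setU tau01 W _).
  by rewrite le_min; apply/andP; split; [exact: cW|exact: cC].
have Kf k : K k -> exists i, (W `|` (BC i).2) k.
  move=> Kk; have [ky|ky] := pselect (k = y).
    by subst k; exists y; apply: or_introl; exact: KW.
  by exists k; apply: or_intror; case: (hBC k) => _ _ _ _; apply.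
have [s Ks] := GammaP_finite_subcover (introT andP (conj c0 c1)) GKc cf Kf.
exists (\bigcap_(k in [set k | List.In k s]) (BC k).1),
       (\bigcup_(k in [set k | List.In k s]) (BC k).2); split.
- by move=> k _; case: (hBC k).
- apply/seteqP; split => // z [Oz [k sk Ckz]]; case: (hBC k) => _ <- _ _ _.
  by split => //; exact: Oz.
- move=> k /Ks [i si [Wk|Cik]]; [left|right] => //; exists i => //.
- apply: (le_tauP_bigcap_seq tau01 tauT tauP_setI _ c1) => k.
  by case: (hBC k) => _ _ cB _ _; exact: cB.
- apply: (le_tauP_bigcup_seq tau01 _ c1) => k.
  by case: (hBC k) => _ _ _ cC _; exact: cC.
Qed.

Lemma le_NP_setC_diff (y : X) (K W P : set X) c :
  0 <= c -> c < T2P tau -> 1 < GammaP tau K + c -> c <= tauP tau P ->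
  ~ W y -> K `<=` W `|` P -> c <= NP tau y (~` (K `&` ~` P)).
Proof.
move=> c0 cT GKc cP nWy KWP; have [Ky|nKy] := pselect (K y).
  have Py : P y by case: (KWP y Ky).
  by apply: le_trans cP (le_NP tau Py _) => z Pz [_]; apply.
have c1 : c <= 1 := ltW (lt_le_trans cT (iinf_le1 _)).
have c_set0 : c <= tauP tau set0 by rewrite tauP_set0; exact: c1.
have [O [P' [Oy OP' KP' cO _]]] := separate_point_compact c0 cT GKc c_set0 nKy.
apply: le_trans cO (le_NP tau Oy _) => z Oz [Kz _].
case: (KP' z Kz) => // P'z; have : (O `&` P') z by [].
by rewrite OP'.
Qed.

(* The middle term is the degree of [Cl_P(V) ⊆ U], as [1 - ClP V y = NP y (~` V)]. *)
Definition compact_nbhd_in (x : X) (U : set X) : R :=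
  ssup [set Num.min (NP tau x V) (Num.min (iinf [set NP tau y (~` V) | y in ~` U]) (GammaP tau V))
       | V in [set V : set X | True]].

Lemma le_compact_nbhd_in x U K c :
  0 <= c -> c < T2P tau -> 1 < GammaP tau K + c -> c < NP tau x K -> c < NP tau x U ->
  GammaP tau K + c - 1 <= compact_nbhd_in x U.
Proof.
move=> c0 cT GKc cK cU; have c1 : c <= 1 := ltW (lt_le_trans cT (iinf_le1 _)).
have gc : GammaP tau K + c - 1 <= c by have : GammaP tau K <= 1 := iinf_le1 _; lra.
have [O0 [O0x O0K cO0]] := NP_gt c0 cK.
have [W0 [W0x W0U cW0]] := NP_gt c0 cU.
have cW : c <= tauP tau (O0 `&` W0) := le_tauP_setI tauP_setI (ltW cO0) (ltW cW0).
have [O [P [Ox OP KWP cO cP]]] :=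
  separate_point_compact c0 cT GKc cW (fun _ => conj O0x W0x).
set V := K `&` ~` P.
have hx : c <= NP tau x V.
  apply: le_trans (le_tauP_setI tauP_setI cW cO) (le_NP tau (conj (conj O0x W0x) Ox) _).
  move=> z [[O0z _] Oz]; split; first exact: O0K.
  by move=> Pz; have : (O `&` P) z by []; rewrite OP.
have hU : c <= iinf [set NP tau y (~` V) | y in ~` U].
  apply: (le_iinf c1) => _ [y nUy <-].
  by apply: (le_NP_setC_diff (W := O0 `&` W0)) c0 cT GKc cP _ KWP => -[_ /W0U].
have hG : GammaP tau K + c - 1 <= GammaP tau V.
  by apply: le_trans (GammaP_closed_subset tau K P); rewrite lerD2r lerD2l.
apply: le_trans (le_ssup_img (b := 1) (a := V) _ I).
  rewrite !le_min; apply/andP; split; [|apply/andP; split] => //.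
  - exact: le_trans gc hx.
  - exact: le_trans gc hU.
by move=> B; rewrite ge_min NP_le1.
Qed.

Lemma T2P_LPC_le_compact_nbhd_in x U :
  T2P tau + 2 * LPC tau + NP tau x U - 3 <= compact_nbhd_in x U.
Proof.
apply/ler_addgt0Pr => e e0; have S0 : 0 <= compact_nbhd_in x U := ssup_ge0 _.
have t1 : T2P tau <= 1 := iinf_le1 _; have l1 : LPC tau <= 1 := iinf_le1 _.
have u1 := NP_le1 tau x U.
have [|big] := lerP (T2P tau + 2 * LPC tau + NP tau x U - 3) e; first by lra.
have le0 : 0 <= LPC tau - e by lra.
have lt_l : LPC tau - e < LPC tau by lra.
have [K lK] := LPC_gt x le0 lt_l.
have a1 := NP_le1 tau x K; have g1 : GammaP tau K <= 1 := iinf_le1 _.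
have := @le_compact_nbhd_in x U K (T2P tau + 2 * LPC tau + NP tau x U - 2 - e - GammaP tau K).
lra.
Qed.

End Regularity.

Theorem theorem4p3 (R : realType) (X : Type) (tau : set X -> R)
  (htau : fuzzifying_topology tau)
  (hP : forall A B : set X,
      tauP tau (A `&` B) >= Num.min (tauP tau A) (tauP tau B)) :
  forall (x : X) (U : set X),
    Num.max 0 (T2P tau + 2 * LPC tau - 2) <=
    Num.min 1 (1 - NP tau x U +
      ssup [set Num.min (NP tau x V)
                 (Num.min (iinf [set NP tau y (~` V) | y in ~` U]) (GammaP tau V))
           | V in [set V : set X | True]]).
Proof.
move=> x U; case: htau => tau01 [tauT _].
have := T2P_LPC_le_compact_nbhd_in tau01 tauT hP x U.
rewrite /compact_nbhd_in; set S := ssup _ => le_S; have S0 : 0 <= S := ssup_ge0 _.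
have t1 : T2P tau <= 1 := iinf_le1 _; have l1 : LPC tau <= 1 := iinf_le1 _.
have u0 := NP_ge0 tau x U; have u1 := NP_le1 tau x U.
by rewrite ge_max !le_min; apply/andP; split; apply/andP; split; lra.
Qed.
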